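(* Let $(a_n)_{n\ge1}$ be a bounded relative convex real sequence, and suppose there exists $(t_n)_{n\ge1}\in T_a$ with $\liminf_{n\to\infty}\Delta t_n>0$. Then $$n\,\frac{\Delta a_n}{\Delta t_n}\to0\quad (n\to\infty),$$ and the series $\sum_{n\ge1} n\,\Delta\!\left(\frac{\Delta a_n}{\Delta t_n}\right)$ converges.
   Context: For a real sequence $(x_i)$, $\Delta x_i=x_{i+1}-x_i$ (applied also to the sequence $x_n=\Delta a_n/\Delta t_n$). ''Increasing'' means strictly increasing. For a real sequence $a=(a_i)_{i\ge1}$, $T_a$ denotes the set of increasing real sequences $(t_i)_{i\ge1}$ such that $(\Delta a_i/\Delta t_i)_{i\ge1}$ is non-decreasing; $a$ is relative convex if $T_a\neq\emptyset$. *)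

(* R : realType. Sequences are nat -> R; only indices >= 1 matter. *)
From HB Require Import structures.
From mathcomp Require Import all_boot all_order all_algebra.
From mathcomp Require Import all_classical all_reals all_analysis.
Set Implicit Arguments. Unset Strict Implicit. Unset Printing Implicit Defensive.
Import Order.TTheory GRing.Theory Num.Theory.
Local Open Scope ring_scope.

Definition fdiff (R : realType) (x : R ^nat) : R ^nat := fun i => x i.+1 - x i.

Definition dquot (R : realType) (a t : R ^nat) : R ^nat :=
  fun n => fdiff a n / fdiff t n.

Definition in_Ta (R : realType) (a t : R ^nat) : Prop :=
  (forall i, (1 <= i)%N -> t i < t i.+1) /\
  (forall i, (1 <= i)%N -> dquot a t i <= dquot a t i.+1).

Definition relative_convex (R : realType) (a : R ^nat) : Prop :=
  exists t : R ^nat, in_Ta a t.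

Definition bounded_seq (R : realType) (a : R ^nat) : Prop :=
  exists M : R, forall n, (1 <= n)%N -> `|a n| <= M.

(* Write d_n = Δa_n/Δt_n and D_N = -(d_1 + ... + d_N).  Since Δt_n >= c > 0
   eventually, and hence for all n >= 1, a positive value of the
   non-decreasing d would make a grow linearly; so d <= 0, and the telescoping
   bound c D_N <= a_1 - a_(N+1) shows that D converges.  Monotonicity gives
   -n d_n <= 2 (D_n - D_(n/2)), so n d_n -> 0, and summation by parts
   sum_(n<N) n Δd_n = N d_N + D_N yields the convergence of the series. *)
From HB Require Import structures.
From mathcomp Require Import all_boot all_order all_algebra.
From mathcomp Require Import all_classical all_reals all_analysis.
From mathcomp Require Import ring lra zify.
Import Order.TTheory GRing.Theory Num.Theory.
Import numFieldNormedType.Exports.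
Local Open Scope classical_set_scope.
Local Open Scope ring_scope.

Set Implicit Arguments.
Unset Strict Implicit.

Lemma limn_einf_gt0_ge (R : realType) (u : R ^nat) :
  (0 < limn_einf (fun n => (u n)%:E))%E ->
  exists c N, 0 < c /\ forall k, (N <= k)%N -> c <= u k.
Proof.
rewrite limn_einf_lim (cvg_lim _ (@cvg_einfs_sup _ _))//.
move=> /ereal_sup_gt[_ [n _ <-]] infs_gt0.
have infs_le k : (n <= k)%N -> (einfs (fun n => (u n)%:E) n <= (u k)%:E)%E.
  by move=> nk; apply: ereal_inf_lbound; exists k.
move: infs_gt0 infs_le (infs_le n (leqnn n)).
case: (einfs _ n) => [r| |] //= r_gt0 infs_le _.
exists r, n; split; first by rewrite -lte_fin.
by move=> k nk; rewrite -lee_fin; apply: infs_le.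
Qed.

Lemma uniform_lower_bound (R : realDomainType) (f : R ^nat) (c : R) (N : nat) :
  (forall j, (1 <= j)%N -> 0 < f j) ->
  0 < c -> (forall k, (N <= k)%N -> c <= f k) ->
  exists c', 0 < c' /\ forall k, (1 <= k)%N -> c' <= f k.
Proof.
move=> f_gt0; elim: N c => [|N IH] c c_gt0 f_ge.
  by exists c; split => // k _; apply: f_ge.
have [N0|N_gt0] := posnP N.
  by exists c; split => // k k1; apply: f_ge; rewrite N0.
apply: (IH (Num.min c (f N))); first by rewrite lt_min c_gt0 f_gt0.
move=> k; rewrite leq_eqVlt => /orP[/eqP<-|Nk]; first by rewrite ge_min lexx orbT.
by rewrite ge_min f_ge.
Qed.

Lemma nondecreasing_from1 (R : realDomainType) (d : R ^nat) :
  (forall i, (1 <= i)%N -> d i <= d i.+1) ->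
  forall m k, (1 <= m)%N -> (m <= k)%N -> d m <= d k.
Proof.
move=> d_mono [//|m] [//|k] _ mk.
have /nondecreasing_seqP shift_mono : forall n, d n.+1 <= d n.+2.
  by move=> n; apply: d_mono.
exact: shift_mono.
Qed.

Lemma fdiff_ge_telescope (R : realType) (a : R ^nat) (m : nat) (delta : R) :
  (forall k, (m <= k)%N -> delta <= fdiff a k) ->
  forall K, K%:R * delta <= a (m + K)%N - a m.
Proof.
move=> fdiff_ge; elim=> [|K IH]; first by rewrite mul0r addn0 subrr.
have := fdiff_ge (m + K)%N (leq_addr _ _); rewrite /fdiff addnS -natr1.
by move: IH; set x := a (m + K)%N; set y := a (m + K).+1; lra.
Qed.

Lemma series_mul_fdiff (R : realType) (d : R ^nat) (N : nat) :
  series (fun n => n%:R * fdiff d n) N = N%:R * d N + series (fun j => - d j.+1) N.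
Proof.
elim: N => [|N IH]; first by rewrite /series /= !big_geq // mul0r addr0.
rewrite /series /= !big_nat_recr //=; move: IH; rewrite /series /= => ->.
by rewrite /fdiff -addn1 natrD; ring.
Qed.

Section NonpositiveNondecreasing.
Variables (R : realType) (d : R ^nat).
Hypothesis d_mono : forall i, (1 <= i)%N -> d i <= d i.+1.
Hypothesis d_le0 : forall i, (1 <= i)%N -> d i <= 0.

Lemma series_opp_nondecreasing :
  {homo series (fun j => - d j.+1) : n m / (n <= m)%N >-> n <= m}.
Proof. by apply: nondecreasing_series => n _ _; rewrite oppr_ge0 d_le0. Qed.

(* The last n - n/2 >= n/2 terms of D_n are all at least -d_n. *)
Lemma mul_n_le_series_half (n : nat) : (1 <= n)%N ->
  - (n%:R * d n) <=
  2 * (series (fun j => - d j.+1) n - series (fun j => - d j.+1) n./2).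
Proof.
move=> n_ge1; have half_le : (n./2 <= n)%N by rewrite -divn2 leq_div.
have -> : series (fun j => - d j.+1) n - series (fun j => - d j.+1) n./2
          = \sum_(n./2 <= j < n) - d j.+1.
  by rewrite /series /= (@big_cat_nat _ _ _ n./2 0 n _ _ (leq0n _) half_le) /= addrC addrK.
have tail_ge : \sum_(n./2 <= j < n) - d n <= \sum_(n./2 <= j < n) - d j.+1.
  by apply: ler_sum_nat => j /andP[_ jn]; rewrite lerN2 nondecreasing_from1.
rewrite sumr_const_nat -mulr_natr in tail_ge.
have n_le : n%:R <= 2 * (n - n./2)%:R :> R.
  by rewrite -natrM ler_nat; have := odd_double_half n; rewrite -!mul2n; lia.
have := d_le0 n_ge1; move: tail_ge n_le.
set x := (n - n./2)%:R; set y := \sum_(_ <= _ < _) _; set z := n%:R; set w := d n.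
move=> tail_ge n_le dn_le0.
have : 0 <= (2 * x - z) * (- w) by rewrite mulr_ge0 // ?subr_ge0 ?oppr_ge0.
by clearbody x y z w; nra.
Qed.

Lemma mul_n_cvg0 : cvgn (series (fun j => - d j.+1)) ->
  (fun n => n%:R * d n) @ \oo --> (0 : R).
Proof.
move=> D_cvg; have D_le_lim := nondecreasing_cvgn_le series_opp_nondecreasing D_cvg.
apply/cvgrPdist_le => e e_gt0.
have /cvgrPdist_le /(_ (e / 2)) := D_cvg.
case=> [|N _ D_near]; first by rewrite divr_gt0.
exists N.*2.+1 => // n /= Nn.
have n_ge1 : (1 <= n)%N by apply: leq_trans Nn.
have N_le_half : (N <= n./2)%N.
  by have := odd_double_half n; rewrite -!mul2n in Nn *; lia.
have := D_near _ N_le_half; have := D_le_lim n; have := D_le_lim n./2.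
have := mul_n_le_series_half n_ge1.
have := mulr_ge0_le0 (ler0n _ n) (d_le0 n_ge1).
rewrite sub0r normrN ler_norml => ? ? ? ? /=.
by rewrite ler_norml => /andP[_ ?]; apply/andP; split; lra.
Qed.

End NonpositiveNondecreasing.

Section RelativeConvex.
Variables (R : realType) (a t : R ^nat) (M c : R).
Hypothesis dquot_mono : forall i, (1 <= i)%N -> dquot a t i <= dquot a t i.+1.
Hypothesis a_bounded : forall n, (1 <= n)%N -> `|a n| <= M.
Hypothesis c_gt0 : 0 < c.
Hypothesis fdiff_t_ge : forall n, (1 <= n)%N -> c <= fdiff t n.

Let fdiff_a n : (1 <= n)%N -> fdiff a n = dquot a t n * fdiff t n.
Proof. by move=> n1; rewrite /dquot divfK // gt_eqF // (lt_le_trans c_gt0) ?fdiff_t_ge. Qed.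

Lemma dquot_le0 m : (1 <= m)%N -> dquot a t m <= 0.
Proof.
move=> m_ge1; rewrite leNgt; apply/negP => dm_gt0.
pose delta := dquot a t m * c.
have delta_gt0 : 0 < delta by rewrite mulr_gt0.
have fdiff_ge k : (m <= k)%N -> delta <= fdiff a k.
  move=> mk; have k_ge1 := leq_trans m_ge1 mk.
  rewrite fdiff_a // ler_pM ?(ltW dm_gt0) ?(ltW c_gt0) ?fdiff_t_ge //.
  exact: nondecreasing_from1.
pose K := (Num.truncn (2 * M / delta)).+1.
have K_large : 2 * M < K%:R * delta by rewrite -ltr_pdivrMr // truncnS_gt.
have := fdiff_ge_telescope fdiff_ge K.
have := a_bounded (leq_trans m_ge1 (leq_addr K m)); have := a_bounded m_ge1.
by rewrite !ler_norml => /andP[? ?] /andP[? ?]; lra.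
Qed.

Lemma series_opp_dquot_le N : series (fun j => - dquot a t j.+1) N <= 2 * M / c.
Proof.
have telescope k : c * series (fun j => - dquot a t j.+1) k <= a 1%N - a k.+1.
  elim: k => [|k IH]; first by rewrite /series /= big_geq // mulr0 subrr.
  rewrite /series /= big_nat_recr //=; move: IH; rewrite /series /=.
  have := fdiff_a (isT : (1 <= k.+1)%N); have := fdiff_t_ge (isT : (1 <= k.+1)%N).
  have := dquot_le0 (isT : (1 <= k.+1)%N); rewrite /fdiff.
  set x := \sum_(_ <= _ < _) _; set y := dquot a t k.+1; set z := t k.+2 - t k.+1.
  by set u := a k.+1; set v := a k.+2; nra.
rewrite ler_pdivlMr // mulrC; apply: le_trans (telescope N) _.
have := a_bounded (isT : (1 <= 1)%N); have := a_bounded (isT : (1 <= N.+1)%N).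
by rewrite !ler_norml => /andP[? ?] /andP[? ?]; lra.
Qed.

Lemma cvgn_series_opp_dquot : cvgn (series (fun j => - dquot a t j.+1)).
Proof.
apply: nondecreasing_is_cvgn; first exact: series_opp_nondecreasing dquot_le0.
by exists (2 * M / c) => _ [n _ <-]; apply: series_opp_dquot_le.
Qed.

End RelativeConvex.

Unset Implicit Arguments.

Theorem proposition3p5 (R : realType) (a t : R ^nat) :
  bounded_seq a -> relative_convex a -> in_Ta a t ->
  (0 < limn_einf (fun n => (fdiff t n)%:E))%E ->
  (fun n => n%:R * dquot a t n) @ \oo --> (0 : R) /\
  cvg (series (fun n => n%:R * fdiff (dquot a t) n) @ \oo).
Proof.
move=> [M a_bounded] _ [t_incr dquot_mono] /limn_einf_gt0_ge [c0 [N [c0_gt0 fdiff_t_ge0]]].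
have fdiff_t_gt0 j : (1 <= j)%N -> 0 < fdiff t j by move=> j1; rewrite subr_gt0 t_incr.
have [c [c_gt0 fdiff_t_ge]] := uniform_lower_bound fdiff_t_gt0 c0_gt0 fdiff_t_ge0.
have dquot_le0 := dquot_le0 dquot_mono a_bounded c_gt0 fdiff_t_ge.
have D_cvg := cvgn_series_opp_dquot dquot_mono a_bounded c_gt0 fdiff_t_ge.
have mul_n_cvg0 := mul_n_cvg0 dquot_mono dquot_le0 D_cvg.
split=> //.
rewrite (_ : series _ = (fun n => n%:R * dquot a t n) + series (fun j => - dquot a t j.+1)).
  exact: is_cvgD (cvgP _ mul_n_cvg0) D_cvg.
by apply/funext => n; rewrite series_mul_fdiff.
Qed.
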